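(* Let $U:\mathbb{C}^*\to\mathbb{C}$ be a reasonable expansion with unique restrictions, between locally small categories, which has the expansion property. Assume that all morphisms in $\mathbb{C}$ are monomorphisms and that $\mathbb{C}^*$ is directed. Let $A\in\mathrm{Ob}(\mathbb{C})$, let $\mathcal{A}_1,\dots,\mathcal{A}_n\in U^{-1}(A)$ be distinct, and assume $t_i=t_{\mathbb{C}^*}(\mathcal{A}_i)\in\mathbb{N}$ for $i\in\{1,\dots,n\}$. Then $t_{\mathbb{C}}(A)\ge\sum_{i=1}^n t_i$.
   Context: Write $X\to Y$ if $\hom(X,Y)\ne\varnothing$; a category is directed if for all objects $A,B$ there is $C$ with $A\to C$, $B\to C$. An expansion of $\mathbb{C}$ is a category $\mathbb{C}^*$ with a functor $U:\mathbb{C}^*\to\mathbb{C}$ surjective on objects and injective on hom-sets; we regard $\hom_{\mathbb{C}^*}(\mathcal{A},\mathcal{B})\subseteq\hom_{\mathbb{C}}(U\mathcal{A},U\mathcal{B})$, and $U^{-1}(A)=\{\mathcal{A}:U(\mathcal{A})=A\}$. $U$ is reasonable if for every $e\in\hom(A,B)$ and $\mathcal{A}\in U^{-1}(A)$ there is $\mathcal{B}\in U^{-1}(B)$ with $e\in\hom(\mathcal{A},\mathcal{B})$; it has unique restrictions if for every $\mathcal{B}$ and $e\in\hom(A,U(\mathcal{B}))$ there is exactly one $\mathcal{A}\in U^{-1}(A)$ with $e\in\hom(\mathcal{A},\mathcal{B})$; it has the expansion property if for every $A\in\mathrm{Ob}(\mathbb{C})$ there is $B\in\mathrm{Ob}(\mathbb{C})$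 with $\mathcal{A}\to\mathcal{B}$ for all $\mathcal{A}\in U^{-1}(A)$, $\mathcal{B}\in U^{-1}(B)$. In a category $\mathbb{D}$: $C\to(B)^A_{k,t}$ means that for every $\chi:\hom(A,C)\to\{0,\dots,k-1\}$ there is $w\in\hom(B,C)$ with $|\chi(w\cdot\hom(A,B))|\le t$; $t_{\mathbb{D}}(A)$ is the least positive $n$ such that for all $k\ge2$ and all $B$ there is $C$ with $C\to(B)^A_{k,n}$, and $\infty$ otherwise. *)

From HB Require Import structures.
From mathcomp Require Import all_boot all_order.
From mathcomp Require Import boolp.
From Stdlib Require Import ProofIrrelevance.

Set Implicit Arguments.
Unset Strict Implicit.
Unset Printing Implicit Defensive.

(* A (locally small) category: hom-sets are types. Composition is written
   [comp g f] = g . f  (first f, then g). *)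
Record Category := {
  Obj : Type;
  Hom : Obj -> Obj -> Type;
  idm : forall X, Hom X X;
  comp : forall X Y Z, Hom Y Z -> Hom X Y -> Hom X Z;
  comp_assoc : forall X Y Z W (h : Hom Z W) (g : Hom Y Z) (f : Hom X Y),
      comp h (comp g f) = comp (comp h g) f;
  comp_id_l : forall X Y (f : Hom X Y), comp (idm Y) f = f;
  comp_id_r : forall X Y (f : Hom X Y), comp f (idm X) = f
}.

Arguments Hom : clear implicits.
Arguments idm {c} X.
Arguments comp {c X Y Z} _ _.

Definition arrow (D : Category) (X Y : Obj D) : Prop := inhabited (Hom D X Y).

Definition directed (D : Category) : Prop :=
  forall X Y : Obj D, exists Z, arrow X Z /\ arrow Y Z.

Definition all_mono (D : Category) : Prop :=
  forall (X Y Z : Obj D) (f : Hom D Y Z) (g h : Hom D X Y),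
    comp f g = comp f h -> g = h.

Definition ramsey_arrow (D : Category) (C B A : Obj D) (k t : nat) : Prop :=
  forall chi : Hom D A C -> 'I_k,
    exists w : Hom D B C,
      #|[set i : 'I_k | `[< exists f : Hom D A B, chi (comp w f) = i >] ]| <= t.

Definition ramsey_prop (D : Category) (A : Obj D) (n : nat) : Prop :=
  forall k, 2 <= k -> forall B : Obj D, exists C : Obj D, ramsey_arrow C B A k n.

(* t_D(A): least positive n with ramsey_prop, None encodes infinity. *)
Definition t_deg (D : Category) (A : Obj D) : option nat :=
  let P := fun n => `[< 0 < n /\ ramsey_prop A n >] in
  match pselect (exists n, P n) with
  | left h => Some (ex_minn h)
  | right _ => None
  end.

Definition le_inf (n : nat) (x : option nat) : Prop :=
  match x with None => True | Some m => n <= m end.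

(* An expansion of C, with hom_{C*}(X,Y) regarded as a subset of
   hom_C(U X, U Y); U is the identity on morphisms. *)
Unset Implicit Arguments.
Record Expansion (C : Category) := {
  OS : Type;
  U : OS -> Obj C;
  memE : forall X Y : OS, Hom C (U X) (U Y) -> Prop;
  memE_id : forall X, memE X X (idm (U X));
  memE_comp : forall X Y Z (g : Hom C (U Y) (U Z)) (f : Hom C (U X) (U Y)),
      memE Y Z g -> memE X Y f -> memE X Z (comp g f);
  U_surj : forall A : Obj C, exists X, U X = A
}.
Set Implicit Arguments.

Arguments OS {C} e.
Arguments U {C} e _.
Arguments memE_id {C} e X.
Arguments memE_comp {C} e {X Y Z g f} _ _.
Arguments memE {C} e {X Y} _.

Section Star.
Variables (C : Category) (E : Expansion C).

Definition homS (X Y : OS E) : Type := {f : Hom C (U E X) (U E Y) | memE E f}.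
Definition idS (X : OS E) : homS X X := exist _ _ (memE_id E X).
Definition compS (X Y Z : OS E) (g : homS Y Z) (f : homS X Y) : homS X Z :=
  exist _ _ (memE_comp E (proj2_sig g) (proj2_sig f)).

Lemma compS_assoc X Y Z W (h : homS Z W) (g : homS Y Z) (f : homS X Y) :
  compS h (compS g f) = compS (compS h g) f.
Proof. apply: eq_sig_hprop => [*|]; [exact: proof_irrelevance | exact: comp_assoc]. Qed.
Lemma compS_id_l X Y (f : homS X Y) : compS (idS Y) f = f.
Proof. apply: eq_sig_hprop => [*|]; [exact: proof_irrelevance | exact: comp_id_l]. Qed.
Lemma compS_id_r X Y (f : homS X Y) : compS f (idS X) = f.
Proof. apply: eq_sig_hprop => [*|]; [exact: proof_irrelevance | exact: comp_id_r]. Qed.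

Definition StarCat : Category :=
  Build_Category compS_assoc compS_id_l compS_id_r.
End Star.

Definition castH (C : Category) (X : Obj C) (B B' : Obj C) (h : B' = B)
  (e : Hom C X B) : Hom C X B' := eq_rect_r (fun b => Hom C X b) e h.
Definition castD (C : Category) (Y : Obj C) (A A' : Obj C) (h : A' = A)
  (e : Hom C A Y) : Hom C A' Y := eq_rect_r (fun a => Hom C a Y) e h.

Definition reasonable (C : Category) (E : Expansion C) : Prop :=
  forall (X : OS E) (B : Obj C) (e : Hom C (U E X) B),
    exists (Y : OS E) (h : U E Y = B), memE E (castH h e).

Definition unique_restrictions (C : Category) (E : Expansion C) : Prop :=
  forall (Y : OS E) (A : Obj C) (e : Hom C A (U E Y)),
    exists! X : OS E, exists h : U E X = A, memE E (castD h e).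

Definition expansion_property (C : Category) (E : Expansion C) : Prop :=
  forall A : Obj C, exists B : Obj C,
    forall X Y : OS E, U E X = A -> U E Y = B ->
      exists f : Hom C (U E X) (U E Y), memE E f.

(* Let m = t_C(A), so that for all K and B some C has C --> (B)^A_{K,m}. For
   each i choose k_i and B_i in C^* such that every Ramsey object for A_i fails
   with t_i - 1 colours, bound all B_i by a single B0 (directedness), and let B
   be given by the expansion property for U(B0). Given a Ramsey object U(Y) for
   B, the bad colourings chi_i of hom(A_i, Y) glue, thanks to unique
   restrictions, into one colouring of hom(A, U(Y)): e gets the tagged colour
   (i, chi_i(e)) for the unique A_i with e in hom(A_i, Y). A good w : B -> U(Y)
   expands to w : B' -> Y, and composing it with B_i -> B0 -> B' exhibits at
   least t_i colours with tag i, so m >= t_1 + ... + t_n. *)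

From mathcomp Require Import all_boot.
From mathcomp Require Import boolp.

Set Implicit Arguments.
Unset Strict Implicit.
Unset Printing Implicit Defensive.

Definition colors (D : Category) (Cc B X : Obj D) (T : finType)
    (chi : Hom D X Cc -> T) (w : Hom D B Cc) : {set T} :=
  [set c | `[< exists f : Hom D X B, chi (comp w f) = c >] ].

Lemma colorsP (D : Category) (Cc B X : Obj D) (T : finType)
    (chi : Hom D X Cc -> T) (w : Hom D B Cc) c :
  reflect (exists f : Hom D X B, chi (comp w f) = c) (c \in colors chi w).
Proof. by rewrite inE; apply: asboolP. Qed.

Section RamseyDegree.
Variable D : Category.

Lemma arrow_trans (X Y Z : Obj D) : arrow X Y -> arrow Y Z -> arrow X Z.
Proof. by case=> f [g]; exact: inhabits (comp g f). Qed.

Lemma directed_ub : directed D ->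
  forall n (F : 'I_n -> Obj D) (Z0 : Obj D),
    exists Z, arrow Z0 Z /\ forall i, arrow (F i) Z.
Proof.
move=> Ddir; elim=> [|n IHn] F Z0.
  by exists Z0; split=> [|[]//]; exact: inhabits (idm Z0).
have [Z [Z0Z FZ]] := IHn (F \o lift ord0) Z0.
have [W [ZW F0W]] := Ddir Z (F ord0).
exists W; split; first exact: arrow_trans ZW.
by move=> i; case: (unliftP ord0 i) => [j ->|->] //; apply: arrow_trans (FZ j) ZW.
Qed.

Lemma ramsey_arrowT (Cc B X : Obj D) (T : finType) t :
  ramsey_arrow Cc B X #|T| t ->
  forall chi : Hom D X Cc -> T, exists w : Hom D B Cc, #|colors chi w| <= t.
Proof.
move=> RA chi; have [w few] := RA (enum_rank \o chi); exists w.
rewrite -(card_imset _ (@enum_rank_inj T)) (leq_trans _ few) //.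
apply/subset_leq_card/subsetP => _ /imsetP[c /colorsP[f <-] ->].
by apply/colorsP; exists f.
Qed.

Lemma not_ramsey_prop (X : Obj D) s : ~ ramsey_prop X s ->
  exists k (B : Obj D), 2 <= k /\ forall Cc : Obj D,
    exists chi : Hom D X Cc -> 'I_k, forall w : Hom D B Cc, s < #|colors chi w|.
Proof.
move=> /existsNP[k /not_implyP[k_ge2 /existsNP[B noC]]].
exists k, B; split=> // Cc.
have /existsNP[chi many] : ~ ramsey_arrow Cc B X k s by move=> RA; apply: noC; exists Cc.
by exists chi => w; rewrite ltnNge; apply/negP => few; apply: many; exists w.
Qed.

Lemma ramsey_prop0 (X : Obj D) : ~ ramsey_prop X 0.
Proof.
move=> /(_ 2 isT X)[Cc /(_ (fun _ => ord0))[w]].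
apply/negP; rewrite -ltnNge; apply/card_gt0P; exists ord0.
by rewrite inE; apply/asboolP; exists (idm X).
Qed.

Lemma t_deg_SomeP (X : Obj D) t : t_deg X = Some t ->
  [/\ 0 < t, ramsey_prop X t & ~ ramsey_prop X t.-1].
Proof.
rewrite /t_deg; case: pselect => [ex|//] [<-].
case: ex_minnP => m /asboolP[m_gt0 Rm] m_min; split=> // Rm1.
case: m m_gt0 Rm m_min Rm1 => [//|[|m]] _ _ m_min Rm1; first exact: ramsey_prop0 Rm1.
by have := m_min m.+1 (asboolT (conj isT Rm1)); rewrite ltnn.
Qed.

End RamseyDegree.

Lemma castDK (D : Category) (Y A A' : Obj D) (h : A' = A) (e : Hom D A' Y) :
  castD h (castD (esym h) e) = e.
Proof. by case: A / h e. Qed.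

Lemma castD_comp (D : Category) (Y Z A A' : Obj D) (h : A' = A)
    (w : Hom D Z Y) (e : Hom D A Z) :
  castD h (comp w e) = comp w (castD h e).
Proof. by case: A / h e. Qed.

Lemma unique_restrictionsP (C : Category) (E : Expansion C) :
  unique_restrictions E ->
  forall (Y X1 X2 : OS E) (A : Obj C) (h1 : U E X1 = A) (h2 : U E X2 = A)
    (e : Hom C A (U E Y)),
  memE E (castD h1 e) -> memE E (castD h2 e) -> X1 = X2.
Proof.
move=> Euniq Y X1 X2 A h1 h2 e e1 e2; have [X [_ X_uniq]] := Euniq Y A e.
by rewrite -(X_uniq X1) ?(X_uniq X2) //; [exists h2 | exists h1].
Qed.

Section Gluing.
Variables (C : Category) (E : Expansion C).
Hypothesis Euniq : unique_restrictions E.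
Variables (A : Obj C) (n : nat) (As : 'I_n -> OS E).
Hypotheses (As_inj : injective As) (UAs : forall i, U E (As i) = A).

Section GluedColoring.
Variables (Y : OS E) (k : 'I_n -> nat) (chi : forall i, homS (As i) Y -> 'I_(k i)).

Definition glued_coloring (e : Hom C A (U E Y)) : option {i : 'I_n & 'I_(k i)} :=
  if [pick i | `[< memE E (castD (UAs i) e) >] ] is Some i then
    if pselect (memE E (castD (UAs i) e)) is left e_i then
      Some (Tagged (fun i => 'I_(k i)) (chi (exist _ _ e_i)))
    else None
  else None.

Lemma glued_coloringE i (g : homS (As i) Y) :
  glued_coloring (castD (esym (UAs i)) (sval g)) =
  Some (Tagged (fun i => 'I_(k i)) (chi g)).
Proof.
rewrite /glued_coloring; case: pickP => [j /asboolP g_j | /(_ i)/asboolP[]]; last first.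
  by rewrite castDK; apply: (proj2_sig g).
have ji : j = i.
  apply: As_inj; apply: unique_restrictionsP g_j _ => //.
  by rewrite castDK; apply: (proj2_sig g).
subst j; case: pselect => [g_i|/(_ g_j)//].
do 3 f_equal; case: g g_i g_j => g g_mem g_i _.
by apply: eq_exist; rewrite castDK.
Qed.

Lemma glued_colors_ge (Z : OS E) (W : 'I_n -> OS E)
    (w : homS Z Y) (v : forall i, homS (W i) Z) :
  \sum_i #|colors (D := StarCat E) (@chi i) (compS w (v i))|
    <= #|colors glued_coloring (sval w)|.
Proof.
pose S i := colors (D := StarCat E) (@chi i) (compS w (v i)).
pose F i := [set Some (Tagged (fun i => 'I_(k i)) c) | c in S i].
have F_card i : #|F i| = #|S i|.
  by rewrite card_imset // => c c' /Some_inj; apply: eq_from_Tagged.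
have F_disj i j : i != j -> [disjoint F i & F j].
  rewrite -setI_eq0; apply: contraNT => /set0Pn[_ /setIP[/imsetP[c _ ->]]].
  by case/imsetP=> c' _ /Some_inj /(congr1 tag) /= ->.
have -> : \sum_i #|S i| = #|\bigcup_i F i|.
  rewrite -sum1_card partition_disjoint_bigcup //.
  by apply: eq_bigr => i _; rewrite sum1_card F_card.
apply/subset_leq_card/bigcupsP => i _; apply/subsetP => _ /imsetP[c /colorsP[f <-] ->].
apply/colorsP; exists (castD (esym (UAs i)) (sval (compS (v i) f))).
by rewrite -castD_comp (glued_coloringE (compS w (compS (v i) f))) compS_assoc.
Qed.

End GluedColoring.

Hypotheses (Eexp : expansion_property E) (Edir : directed (StarCat E)).

Lemma ramsey_prop_sum_le m (s : 'I_n -> nat) :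
  ramsey_prop A m -> (forall i, ~ ramsey_prop (D := StarCat E) (As i) (s i)) ->
  \sum_i (s i).+1 <= m.
Proof.
move=> RA s_bad.
have /fin_all_exists[k /fin_all_exists[B bad]] := fun i => not_ramsey_prop (s_bad i).
have [n0|n_gt0] := posnP n.
  by rewrite big_pred0 // => i; have := leq_trans (ltn_ord i) (eq_leq n0).
have [B0 [_ B_B0]] := directed_ub Edir B (As (Ordinal n_gt0)).
have /fin_all_exists[g _] : forall i, exists _ : homS (B i) B0, True.
  by move=> i; case: (B_B0 i) => g; exists g.
have [Bc Bc_exp] := Eexp (U E B0).
pose T := option {i : 'I_n & 'I_(k i)}.
have T_ge2 : 2 <= #|{: T}|.
  rewrite card_option ltnS; apply/card_gt0P.
  have [k_ge2 _] := bad (Ordinal n_gt0).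
  by exists (Tagged (fun i => 'I_(k i)) (Ordinal (ltnW k_ge2))).
have [Cc /ramsey_arrowT RAc] := RA _ T_ge2 Bc.
have [Y YCc] := U_surj _ E Cc; subst Cc.
have /fin_all_exists[chi chi_bad] := fun i => (bad i).2 Y.
have [w w_few] := RAc (glued_coloring chi).
have [Bs [[BsBc w_mem] _]] := Euniq w; subst Bc.
have [fB fB_mem] := Bc_exp B0 Bs erefl erefl.
pose v i : homS (B i) Bs := compS (exist _ fB fB_mem) (g i).
apply: leq_trans (leq_trans _ (glued_colors_ge chi (exist _ w w_mem) v)) w_few.
by apply: leq_sum => i _; apply: chi_bad.
Qed.

End Gluing.

Theorem lemma6p2 (C : Category) (E : Expansion C)
  (Hreas : reasonable E) (Huniq : unique_restrictions E)
  (Hexp : expansion_property E)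
  (Hmono : all_mono C) (Hdir : directed (StarCat E))
  (A : Obj C) (n : nat) (As : 'I_n -> OS E) (Ainj : injective As)
  (HA : forall i, U E (As i) = A)
  (t : 'I_n -> nat)
  (Ht : forall i, t_deg (D := StarCat E) (As i) = Some (t i)) :
  le_inf (\sum_(i < n) t i) (t_deg A).
Proof.
rewrite /le_inf; case HAm: (t_deg A) => [m|//].
have [_ RA _] := t_deg_SomeP HAm.
have t_spec i := t_deg_SomeP (Ht i).
have t_bad i : ~ ramsey_prop (D := StarCat E) (As i) (t i).-1 by case: (t_spec i).
have := ramsey_prop_sum_le Huniq Ainj HA Hexp Hdir RA t_bad.
by apply: leq_trans; apply: leq_sum => i _; case: (t_spec i) => /prednK ->.
Qed.
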